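(* Every DSC semigroup is simple, i.e. has no ideal other than itself.
   Context: For a semigroup $S$, a diagonal subsemigroup of $S\times S$ is a subsemigroup of $S\times S$ containing $\Delta=\{(s,s)\colon s\in S\}$. A congruence on $S$ is a diagonal subsemigroup of $S\times S$ that is symmetric and transitive (as a relation on $S$). A semigroup $S$ is DSC if every diagonal subsemigroup of $S\times S$ is a congruence on $S$. An ideal of $S$ is a nonempty $I\subseteq S$ with $sx,xs\in I$ for all $x\in I$, $s\in S$. *)

Definition associative_op {S : Type} (op : S -> S -> S) : Prop :=
  forall x y z, op x (op y z) = op (op x y) z.

Definition diagonal_subsemigroup {S : Type} (op : S -> S -> S)
  (D : S -> S -> Prop) : Prop :=
  (forall s, D s s) /\
  (forall a b c d, D a b -> D c d -> D (op a c) (op b d)).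

Definition congruence {S : Type} (op : S -> S -> S) (D : S -> S -> Prop) : Prop :=
  diagonal_subsemigroup op D /\
  (forall a b, D a b -> D b a) /\
  (forall a b c, D a b -> D b c -> D a c).

Definition DSC {S : Type} (op : S -> S -> S) : Prop :=
  forall D : S -> S -> Prop, diagonal_subsemigroup op D -> congruence op D.

Definition is_ideal {S : Type} (op : S -> S -> S) (I : S -> Prop) : Prop :=
  (exists x, I x) /\
  (forall s x, I x -> I (op s x) /\ I (op x s)).

Definition simple_semigroup {S : Type} (op : S -> S -> S) : Prop :=
  forall I : S -> Prop, is_ideal op I -> forall x, I x.


(* For an ideal I, the relation Δ ∪ (I × S) is a diagonal subsemigroup; if it
   is symmetric, then every x is related to an element of I from the right
   side, hence lies in I. *)

Definition ideal_extension {S : Type} (I : S -> Prop) (a b : S) : Prop :=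
  a = b \/ I a.

Lemma ideal_extension_diagonal_subsemigroup (S : Type) (op : S -> S -> S)
  (I : S -> Prop) :
  is_ideal op I -> diagonal_subsemigroup op (ideal_extension I).
Proof.
  intros [_ HI]; split.
  - intros s; left; reflexivity.
  - intros a b c d [<- | Ia] [<- | Ic].
    + left; reflexivity.
    + right; apply (HI a c Ic).
    + right; apply (HI c a Ia).
    + right; apply (HI c a Ia).
Qed.

Lemma ideal_extension_sym_full (S : Type) (I : S -> Prop) :
  (exists i, I i) ->
  (forall a b, ideal_extension I a b -> ideal_extension I b a) ->
  forall x, I x.
Proof.
  intros [i Ii] Hsym x.
  destruct (Hsym i x (or_intror Ii)) as [-> | Ix]; assumption.
Qed.

Theorem mainTheorem2 (S : Type) (op : S -> S -> S) (Hassoc : associative_op op) :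
  DSC op -> simple_semigroup op.
Proof.
  intros Hdsc I Hideal.
  destruct (Hdsc _ (ideal_extension_diagonal_subsemigroup _ op I Hideal))
    as [_ [Hsym _]].
  exact (ideal_extension_sym_full _ I (proj1 Hideal) Hsym).
Qed.
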